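(* In the setting of the context, suppose $G$ is an anchor subgraph and: (a) edges are $r$-driven; (b) the $T_r$ are independent Bernoulli random variables with probability $p\in(0,1)$; (c) $\{(a,r)\mid u_{ar}\neq0\}\subset G$; (d) $c_{ar}=\mathbb I((a,r)\in G)$; (e) $w_{ar}\neq0$ for all $(a,r)$; (f) $|\{r\mid u_{ar}\neq0\}|>0$ for all $a$. Then for every $a\in\mathcal A$, $$\mathrm{Cov}\left(\widehat{\mathcal W_a(\mathbf 1)}^c,\hat\beta^u_a\right)=0.$$
   Context: Setting (endogenous bipartite interference graph). $\mathcal A$ is a set of $n_a$ analysis units, $\mathcal R$ a set of $n_r$ randomization units. A random treatment vector $\mathbf T=(T_r)_{r\in\mathcal R}\in\{0,1\}^{n_r}$ is assigned; all randomness comes from $\mathbf T$. For each $(a,r)$ there is an unknown edge potential outcome function $E_{ar}:\{0,1\}^{n_r}\to\{0,1\}$ with observed realization $e_{ar}=E_{ar}(\mathbf T)$. Edges are $r$-driven if each $E_{ar}(\mathbf T)$ depends on $\mathbf T$ only through $T_r$. An anchor subgraph is a set $G\subset\mathcal A\times\mathcal R$ with $E_{ar}(\mathbf T)=1$ for all $\mathbf T$ and all $(a,r)\in G$. Outcome model: known real weights $w_{ar}$; $y_a=Y_a(\mathbf T)=\alpha_a+\beta_ax_a$, $x_a=\sum_rT_rE_{ar}(\mathbf T)w_{ar}$, unknown constants $\alpha_a,\beta_a$. Estimators: for fixed real weights $u_{ar},c_{ar}$, $z^u_a=\sum_rT_ru_{ar}$, $\hat\beta^u_a=y_a(z^u_a-\mathbb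 Ez^u_a)/\mathrm{Cov}(x_a,z^u_a)$, $\widehat{\mathcal W_a(\mathbf 1)}^c=\sum_r\left[\frac{T_rw_{ar}(e_{ar}-c_{ar})}{p}+w_{ar}c_{ar}\right]$. *)

From HB Require Import structures.
From mathcomp Require Import all_boot all_order all_algebra.
Set Implicit Arguments. Unset Strict Implicit. Unset Printing Implicit Defensive.
Import Order.TTheory GRing.Theory Num.Theory.
Local Open Scope ring_scope.

Section Defs.
Variables (K : realFieldType) (Ru : finType).

Definition tvec := {ffun Ru -> bool}.

Definition bern_prob (p : K) (t : tvec) : K :=
  \prod_(r : Ru) (if t r then p else 1 - p).

Definition Ex (p : K) (f : tvec -> K) : K := \sum_(t : tvec) bern_prob p t * f t.

Definition Covar (p : K) (f g : tvec -> K) : K :=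
  Ex p (fun t => f t * g t) - Ex p f * Ex p g.

Definition tnum (t : tvec) (r : Ru) : K := (t r)%:R.
End Defs.

Section Model.
Variables (K : realFieldType) (Au Ru : finType).
Variable (E : Au -> Ru -> tvec Ru -> bool).   (* edge potential outcomes *)
Variable (w : Au -> Ru -> K).

Definition xa (a : Au) (t : tvec Ru) : K :=
  \sum_(r : Ru) tnum K t r * (E a r t)%:R * w a r.

Definition ya (alpha beta : Au -> K) (a : Au) (t : tvec Ru) : K :=
  alpha a + beta a * xa a t.

Definition zu (u : Au -> Ru -> K) (a : Au) (t : tvec Ru) : K :=
  \sum_(r : Ru) tnum K t r * u a r.

Definition beta_hat (p : K) (alpha beta : Au -> K) (u : Au -> Ru -> K)
  (a : Au) (t : tvec Ru) : K :=
  ya alpha beta a t * (zu u a t - Ex p (zu u a)) / Covar p (xa a) (zu u a).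

Definition W_hat (p : K) (c : Au -> Ru -> K) (a : Au) (t : tvec Ru) : K :=
  \sum_(r : Ru) (tnum K t r * w a r * ((E a r t)%:R - c a r) / p + w a r * c a r).

Definition r_driven : Prop :=
  forall a r (t t' : tvec Ru), t r = t' r -> E a r t = E a r t'.

Definition anchor (G : {set Au * Ru}) : Prop :=
  forall a r, (a, r) \in G -> forall t : tvec Ru, E a r t = true.
End Model.

(* Split W_hat into its per-unit terms and use bilinearity of the covariance.
   A term with (a, r) in G is the constant w_ar, hence uncorrelated with
   anything.  A term with (a, r) outside G is, the edges being r-driven, a
   function of T_r alone, and u_ar = 0 there, so z^u_a does not involve T_r.
   Isolating the r-th summand of x_a then writes beta_hat as
   h(T_r) Z + Q with Z, Q independent of T_r and E Z = 0; by independence of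
   T_r from the other coordinates both parts are uncorrelated with any
   function of T_r. *)
From HB Require Import structures.
From mathcomp Require Import all_boot all_order all_algebra.
From mathcomp Require Import ring.
Import GRing.Theory.
Set Implicit Arguments. Unset Strict Implicit. Unset Printing Implicit Defensive.
Local Open Scope ring_scope.

Section TreatmentUpdate.
Variable Ru : finType.
Implicit Types (r : Ru) (b : bool) (t : tvec Ru).

Definition tset r b t : tvec Ru := [ffun i => if i == r then b else t i].

Lemma tset_at r b t : tset r b t r = b.
Proof. by rewrite ffunE eqxx. Qed.

Lemma tset_ne r i b t : i != r -> tset r b t i = t i.
Proof. by rewrite ffunE => /negbTE ->. Qed.

Lemma tset_tset r b b' t : tset r b (tset r b' t) = tset r b t.
Proof. by apply/ffunP => i; rewrite !ffunE; case: eqP. Qed.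

Lemma tset_id r t : tset r (t r) t = t.
Proof. by apply/ffunP => i; rewrite ffunE; case: eqP => // ->. Qed.

Definition tflip r t := tset r (~~ t r) t.

Lemma tflipK r : involutive (tflip r).
Proof. by move=> t; rewrite /tflip tset_at negbK tset_tset tset_id. Qed.

Definition coord_free (K : Type) r (f : tvec Ru -> K) :=
  forall b t, f (tset r b t) = f t.

End TreatmentUpdate.

Section Expectation.
Variables (K : realFieldType) (Ru : finType) (p : K).
Implicit Types (r : Ru) (t : tvec Ru) (f g F : tvec Ru -> K).

Lemma Ex_ext f g : f =1 g -> Ex p f = Ex p g.
Proof. by move=> fg; apply: eq_bigr => t _; rewrite fg. Qed.

Lemma ExD f g : Ex p (fun t => f t + g t) = Ex p f + Ex p g.
Proof. by rewrite /Ex -big_split; apply: eq_bigr => t _; rewrite mulrDr. Qed.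

Lemma ExZ k f : Ex p (fun t => k * f t) = k * Ex p f.
Proof. by rewrite /Ex mulr_sumr; apply: eq_bigr => t _; rewrite mulrCA. Qed.

Lemma Ex_sum (I : finType) (F : I -> tvec Ru -> K) :
  Ex p (fun t => \sum_i F i t) = \sum_i Ex p (F i).
Proof. by rewrite /Ex exchange_big; apply: eq_bigr => t _; rewrite mulr_sumr. Qed.

Lemma Ex1 : Ex p (fun _ : tvec Ru => 1) = 1.
Proof.
rewrite /Ex /bern_prob; under eq_bigr do rewrite mulr1.
rewrite -(bigA_distr_bigA (fun (i : Ru) (b : bool) => if b then p else 1 - p)).
by apply: big1 => i _; rewrite big_bool /= addrC subrK.
Qed.

Lemma Ex_cst k : Ex p (fun _ : tvec Ru => k) = k.
Proof. by rewrite -[RHS]mulr1 -Ex1 -ExZ; apply: Ex_ext => t; rewrite mulr1. Qed.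

Lemma bern_prob_coord r t :
  bern_prob p t = (if t r then p else 1 - p) *
                  \prod_(i | i != r) (if t i then p else 1 - p).
Proof. by rewrite /bern_prob (bigD1 r). Qed.

Lemma sum_coord_split r (G : tvec Ru -> K) :
  \sum_(t : tvec Ru) G t = \sum_(t : tvec Ru | t r) (G t + G (tflip r t)).
Proof.
rewrite big_split (bigID (fun t : tvec Ru => t r)) /=; congr (_ + _).
rewrite (reindex_inj (inv_inj (tflipK r))) /=.
by apply: eq_bigl => t; rewrite /tflip tset_at negbK.
Qed.

Lemma Ex_condition r F :
  Ex p F = p * Ex p (F \o tset r true) + (1 - p) * Ex p (F \o tset r false).
Proof.
rewrite /Ex !(sum_coord_split r) !mulr_sumr -big_split /=.
apply: eq_bigr => t tr.
have flipE : tflip r t = tset r false t by rewrite /tflip tr.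
have trueE : tset r true t = t by rewrite -tr tset_id.
rewrite flipE !tset_tset trueE !(bern_prob_coord r) tset_at tr.
have restE : \prod_(i | i != r) (if tset r false t i then p else 1 - p) =
              \prod_(i | i != r) (if t i then p else 1 - p).
  by apply: eq_bigr => i ir; rewrite tset_ne.
rewrite !restE.
ring.
Qed.

Lemma Ex_mul_coord r (h : bool -> K) g : coord_free r g ->
  Ex p (fun t => h (t r) * g t) = Ex p (fun t => h (t r)) * Ex p g.
Proof.
move=> gr; rewrite (Ex_condition r) [Ex p (fun t => h (t r))](Ex_condition r).
have sliceE b : Ex p ((fun t => h (t r) * g t) \o tset r b) = h b * Ex p g.
  by rewrite -ExZ; apply: Ex_ext => t; rewrite /= tset_at gr.
have slice_hE b : Ex p ((fun t => h (t r)) \o tset r b) = h b.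
  by rewrite -[RHS](Ex_cst (h b)); apply: Ex_ext => t; rewrite /= tset_at.
by rewrite !sliceE !slice_hE; ring.
Qed.

Definition centered f t := f t - Ex p f.

Lemma Ex_centered f : Ex p (centered f) = 0.
Proof. by rewrite /centered (ExD f) Ex_cst subrr. Qed.

Lemma Covar_ext f1 f2 g1 g2 : f1 =1 f2 -> g1 =1 g2 ->
  Covar p f1 g1 = Covar p f2 g2.
Proof.
move=> f12 g12; rewrite /Covar (Ex_ext f12) (Ex_ext g12).
by congr (_ - _); apply: Ex_ext => t; rewrite f12 g12.
Qed.

Lemma Covar_suml (I : finType) (F : I -> tvec Ru -> K) g :
  Covar p (fun t => \sum_i F i t) g = \sum_i Covar p (F i) g.
Proof.
rewrite /Covar sumrB Ex_sum mulr_suml; congr (_ - _).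
by rewrite -Ex_sum; apply: Ex_ext => t; rewrite mulr_suml.
Qed.

Lemma CovarDr f g1 g2 :
  Covar p f (fun t => g1 t + g2 t) = Covar p f g1 + Covar p f g2.
Proof.
rewrite /Covar (Ex_ext (g := fun t => f t * g1 t + f t * g2 t)).
  by rewrite !ExD; ring.
by move=> t; rewrite mulrDr.
Qed.

Lemma Covar_cstl k g : Covar p (fun _ : tvec Ru => k) g = 0.
Proof. by rewrite /Covar ExZ Ex_cst subrr. Qed.

Lemma Covar_coord_free r (h : bool -> K) g : coord_free r g ->
  Covar p (fun t => h (t r)) g = 0.
Proof. by move=> gr; rewrite /Covar (Ex_mul_coord h gr) subrr. Qed.

Lemma Covar_coord_mul r (h1 h2 : bool -> K) g : coord_free r g ->
  Covar p (fun t => h1 (t r)) (fun t => h2 (t r) * g t) =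
  Covar p (fun t => h1 (t r)) (fun t => h2 (t r)) * Ex p g.
Proof.
move=> gr; rewrite /Covar (Ex_mul_coord h2 gr).
under Ex_ext do rewrite mulrA.
by rewrite (Ex_mul_coord (fun b => h1 b * h2 b) gr); ring.
Qed.

End Expectation.

Section Model.
Variables (K : realFieldType) (Au Ru : finType).
Variables (E : Au -> Ru -> tvec Ru -> bool) (w : Au -> Ru -> K).
Hypothesis E_r_driven : r_driven E.
Implicit Types (a : Au) (r : Ru) (t : tvec Ru).

Lemma r_driven_cst a r t : E a r t = E a r [ffun => t r].
Proof. by apply: E_r_driven; rewrite ffunE. Qed.

Definition x_term a r t : K := tnum K t r * (E a r t)%:R * w a r.

Definition W_term p (c : Au -> Ru -> K) a r t : K :=
  tnum K t r * w a r * ((E a r t)%:R - c a r) / p + w a r * c a r.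

Lemma x_term_coord a r t : x_term a r t = x_term a r [ffun => t r].
Proof. by rewrite /x_term /tnum ffunE -r_driven_cst. Qed.

Lemma W_term_coord p c a r t : W_term p c a r t = W_term p c a r [ffun => t r].
Proof. by rewrite /W_term /tnum ffunE -r_driven_cst. Qed.

Lemma x_term_free a r i : i != r -> coord_free r (x_term a i).
Proof.
move=> ir b t; have tiE : tset r b t i = t i by rewrite tset_ne.
by rewrite /x_term /tnum tiE (E_r_driven a tiE).
Qed.

Lemma zu_free (u : Au -> Ru -> K) a r : u a r = 0 -> coord_free r (zu u a).
Proof.
move=> uar b t; apply: eq_bigr => i _.
by have [->|ir] := eqVneq i r; rewrite ?uar ?mulr0 // /tnum tset_ne.
Qed.

Lemma beta_hat_coord_split p alpha beta u a r t :
  let Z := centered p (zu u a) in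
  let C := Covar p (xa E w a) (zu u a) in
  beta_hat E w p alpha beta u a t =
    x_term a r [ffun => t r] * (beta a / C * Z t) +
    (alpha a + beta a * \sum_(i | i != r) x_term a i t) / C * Z t.
Proof.
move=> Z C; rewrite /Z /C /beta_hat /ya /centered.
have -> : xa E w a t = x_term a r t + \sum_(i | i != r) x_term a i t.
  by rewrite /xa (bigD1 r).
by rewrite (x_term_coord a r t); ring.
Qed.

Lemma Covar_coord_beta_hat p alpha beta u a r (h : bool -> K) :
  u a r = 0 -> Covar p (fun t => h (t r)) (beta_hat E w p alpha beta u a) = 0.
Proof.
move=> uar; have Zfree : coord_free r (centered p (zu u a)).
  by move=> b t; rewrite /centered (zu_free uar).
rewrite (Covar_ext p (fun t => erefl) (beta_hat_coord_split _ _ _ _ _ r)) CovarDr.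
rewrite (Covar_coord_mul p _ (fun b => x_term a r [ffun => b])); last first.
  by move=> b t; rewrite Zfree.
rewrite ExZ Ex_centered !mulr0 add0r Covar_coord_free //.
move=> b t; rewrite Zfree; congr (_ / _ * _); congr (_ + _ * _).
by apply: eq_bigr => i ir; rewrite (x_term_free _ ir).
Qed.

End Model.

Unset Implicit Arguments.

Theorem lemma2 (K : realFieldType) (Au Ru : finType)
  (E : Au -> Ru -> tvec Ru -> bool) (w u c : Au -> Ru -> K)
  (alpha beta : Au -> K) (p : K) (G : {set Au * Ru}) :
  anchor E G ->
  r_driven E ->
  0 < p < 1 ->
  (forall a r, u a r != 0 -> (a, r) \in G) ->
  (forall a r, c a r = if (a, r) \in G then 1 else 0) ->
  (forall a r, w a r != 0) ->
  (forall a, (0 < #|[set r | (u a r != 0)%R]|)%N) ->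
  forall a : Au,
    Covar p (W_hat E w p c a) (beta_hat E w p alpha beta u a) = 0.
Proof.
move=> E_anchor E_r_driven _ u_G c_G _ _ a.
change (Covar p (fun t => \sum_r W_term E w p c a r t)
              (beta_hat E w p alpha beta u a) = 0).
rewrite Covar_suml; apply: big1 => r _.
have [arG | arNG] := boolP ((a, r) \in G).
  rewrite (Covar_ext p (f2 := fun _ => w a r) _ (fun t => erefl)) ?Covar_cstl //.
  move=> t; rewrite /W_term c_G arG E_anchor //.
  by rewrite subrr !mulr0 mul0r add0r mulr1.
have uar : u a r = 0 by apply: contraNeq arNG; apply: u_G.
rewrite (Covar_ext p (W_term_coord w E_r_driven p c a r) (fun t => erefl)).
exact: (Covar_coord_beta_hat w E_r_driven p alpha beta
          (fun b => W_term E w p c a r [ffun => b]) uar).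
Qed.
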